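(* Let $X=[x_1\ \cdots\ x_N]\in\mathbb{R}^{n\times N}$ with $\operatorname{rank}(X)=n$, let $m=\nu_n(X)$, and assume $N\ge s\,m$. For $\Lambda=[\eta_1\ \cdots\ \eta_s]\in\mathbb{R}^{n\times s}$ define $$g(\Lambda)=\min\Big\{\sum_{i=1}^s\|X_{J_i}^\top\eta_i\|_1:\ J_1,\ldots,J_s\subset\mathbb{T}\text{ pairwise disjoint},\ |J_i|\ge m\ \forall i\Big\},$$ $\|\Lambda\|_{2,\mathrm{col}}=\sum_{i=1}^s\|\eta_i\|_2$, and $D=\inf\{g(\Lambda):\|\Lambda\|_{2,\mathrm{col}}=1\}$. Then $$D\ge\gamma_m\ge\min_{I\subset\mathbb{T},\,|I|=m}\lambda_{\min}^{1/2}\big(X_IX_I^\top\big),$$ where $\gamma_m=\inf\{\|X_I^\top\eta\|_1:\eta\in\mathbb{R}^n,\ \|\eta\|_2=1,\ I\subset\mathbb{T},\ |I|\ge m\}$.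
   Context: $\mathbb{T}=\{1,\ldots,N\}$. $X_I$ denotes the submatrix of $X$ formed by the columns indexed by $I$. $\lambda_{\min}(\cdot)$ is the smallest eigenvalue of a symmetric matrix. Genericity index: $\nu_n(X)$ is the smallest integer $m$ such that for every $\mathcal{S}\subset\mathbb{T}$ with $|\mathcal{S}|=m$, $\operatorname{rank}(X_{\mathcal{S}})=n$. *)

From HB Require Import structures.
From mathcomp Require Import all_boot all_order all_algebra.
From mathcomp Require Import boolp classical_sets reals.
Set Implicit Arguments. Unset Strict Implicit. Unset Printing Implicit Defensive.
Import Order.TTheory GRing.Theory Num.Theory.
Local Open Scope ring_scope.

Section Defs.
Variable R : realType.

(* X_I : the submatrix of X formed by the columns indexed by I (in increasing order). *)
Definition subcols (n N : nat) (X : 'M[R]_(n, N)) (I : {set 'I_N}) : 'M[R]_(n, #|I|) :=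
  colsub (fun k : 'I_#|I| => enum_val k) X.

Definition norm1 (k : nat) (v : 'cV[R]_k) : R := \sum_(i < k) `|v i 0|.
Definition norm2 (k : nat) (v : 'cV[R]_k) : R := Num.sqrt (\sum_(i < k) v i 0 ^+ 2).

(* m = nu_n(X): the smallest m such that every column subset of size m has rank n *)
Definition rank_n_all (n N : nat) (X : 'M[R]_(n, N)) (m : nat) : Prop :=
  forall S : {set 'I_N}, #|S| = m -> \rank (subcols X S) = n.
Definition is_genericity_index (n N : nat) (X : 'M[R]_(n, N)) (m : nat) : Prop :=
  rank_n_all X m /\ (forall m', rank_n_all X m' -> (m <= m')%N).

Definition lambda_min (n : nat) (A : 'M[R]_n) : R := inf [set a : R | eigenvalue A a]%classic.

Definition gfun (n N s m : nat) (X : 'M[R]_(n, N)) (L : 'M[R]_(n, s)) : R :=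
  inf [set v : R | exists J : 'I_s -> {set 'I_N},
        (forall i j, i != j -> @disjoint _ (mem (J i)) (mem (J j))) /\
        (forall i, (m <= #|J i|)%N) /\
        v = \sum_(i < s) norm1 ((subcols X (J i))^T *m col i L)]%classic.

Definition colnorm (n s : nat) (L : 'M[R]_(n, s)) : R := \sum_(i < s) norm2 (col i L).

Definition Dconst (n N s m : nat) (X : 'M[R]_(n, N)) : R :=
  inf [set v : R | exists L : 'M[R]_(n, s), colnorm L = 1 /\ v = gfun m X L]%classic.

Definition gamma (n N m : nat) (X : 'M[R]_(n, N)) : R :=
  inf [set v : R | exists (eta : 'cV[R]_n) (I : {set 'I_N}),
        norm2 eta = 1 /\ (m <= #|I|)%N /\ v = norm1 ((subcols X I)^T *m eta)]%classic.

Definition min_sqrt_lambda (n N m : nat) (X : 'M[R]_(n, N)) : R :=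
  inf [set v : R | exists I : {set 'I_N}, #|I| = m /\
        v = Num.sqrt (lambda_min (subcols X I *m (subcols X I)^T))]%classic.
End Defs.

From HB Require Import structures.
From mathcomp Require Import all_boot all_order all_algebra.
From mathcomp Require Import sesquilinear spectral complex.
From mathcomp Require Import zify.
From mathcomp Require Import boolp classical_sets reals.
Set Implicit Arguments. Unset Strict Implicit. Unset Printing Implicit Defensive.
Import Order.TTheory GRing.Theory Num.Theory.
Local Open Scope ring_scope.

(* Given a unit vector eta and |I| >= m, pick I0 in I with
   |I0| = m.  By the Rayleigh principle (a real symmetric matrix has an
   eigenvalue below its quadratic form on any unit vector, proved through
   the complex spectral theorem), lambda_min(X_I0 X_I0^T) is at most
   eta^T X_I0 X_I0^T eta = ||X_I0^T eta||_2^2 <= ||X_I0^T eta||_1^2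
   <= ||X_I^T eta||_1^2.
   First bound.  By homogeneity gamma_m ||eta||_2 <= ||X_I^T eta||_1 whenever
   |I| >= m, so summing over the columns of Lambda gives
   gamma_m ||Lambda||_{2,col} <= g(Lambda); the infimum defining g(Lambda) is
   over a nonempty family because N >= s m leaves room for s disjoint blocks
   of m consecutive indices.
   When n = 0 there is no unit vector: gamma_m and the minimum of the square
   roots of the smallest eigenvalues are both 0, and D >= 0. *)

Section Rayleigh.
Variable R : rcfType.
Local Notation C := (R[i]).
Local Notation toC := (real_complex R).

Lemma conj_toC (x : R) : (toC x)^* = toC x.
Proof. by apply: conj_Creal; apply/complex_realP; exists x. Qed.

Local Open Scope sesquilinear_scope.

Lemma diag_form n (u d : 'rV[C]_n) :
  (u *m diag_mx d *m u^t* ) 0 0 = \sum_k d 0 k * (u 0 k * (u 0 k)^* ).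
Proof.
rewrite -mulmxA mul_diag_mx mxE; apply: eq_bigr => k _.
by rewrite !mxE mulrCA.
Qed.

Lemma gram_form n (u : 'rV[C]_n) : (u *m u^t* ) 0 0 = \sum_k u 0 k * (u 0 k)^*.
Proof. by rewrite mxE; apply: eq_bigr => k _; rewrite !mxE. Qed.

Variables (n : nat) (A : 'M[R]_n).
Hypothesis A_sym : A^T = A.

(* A viewed as a complex matrix is hermitian, so it has a unitary
   diagonalization [A = P^* diag(d) P] with real spectrum [d]. *)
Let AC : 'M[C]_n := map_mx toC A.
Let P := spectralmx AC.
Let d := spectral_diag AC.

Lemma AC_hermitian : AC \is hermsymmx.
Proof.
apply/is_hermitianmxP; rewrite expr0 scale1r.
by apply/matrixP=> i j; rewrite !mxE conj_toC -{1}A_sym mxE.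
Qed.

Lemma AC_spectral : AC = P^t* *m diag_mx d *m P.
Proof.
have /orthomx_spectralP -> := hermitian_normalmx AC_hermitian.
by rewrite invmx_unitary ?spectral_unitarymx.
Qed.

Lemma spectral_mulmx_adj : P *m P^t* = 1%:M.
Proof. exact/unitarymxP/spectral_unitarymx. Qed.

Lemma spectral_diag_toC j : d 0 j = toC (complex.Re (d 0 j)).
Proof.
rewrite RRe_real //.
by move/mxOverP: (hermitian_spectral_diag_real AC_hermitian); apply.
Qed.

(* The rows of [P] are eigenvectors, so every [Re d_j] is an eigenvalue of [A]. *)
Lemma eigenvalue_spectral_diag j : eigenvalue A (complex.Re (d 0 j)).
Proof.
have eigC : eigenvalue AC (d 0 j).
  apply/eigenvalueP; exists (row j P).
    by rewrite -row_mul {1}AC_spectral !mulmxA spectral_mulmx_adj mul1mx row_mul row_diag_mx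
      -scalemxAl -rowE.
  apply: contraTneq isT => Pj0.
  have := congr1 (row j) spectral_mulmx_adj; rewrite row_mul Pj0 mul0mx row1 => /rowP/(_ j).
  by rewrite !mxE !eqxx => /eqP; rewrite eq_sym oner_eq0.
move: eigC; rewrite spectral_diag_toC !eigenvalue_root_char.
by rewrite -map_char_poly fmorph_root.
Qed.

Lemma quadratic_form_spectral (v : 'rV[R]_n) (u : 'rV[C]_n) :
  u = map_mx toC v *m P^t* ->
  toC ((v *m A *m v^T) 0 0) = (u *m diag_mx d *m u^t* ) 0 0 /\
  toC ((v *m v^T) 0 0) = (u *m u^t* ) 0 0.
Proof.
move=> def_u.
have toC_form (M : 'M[R]_n) : toC ((v *m M *m v^T) 0 0) =
    (map_mx toC v *m map_mx toC M *m (map_mx toC v)^t* ) 0 0.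
  have -> : (map_mx toC v)^t* = map_mx toC v^T.
    by apply/matrixP=> i k; rewrite !mxE conj_toC.
  by rewrite -(map_mxM toC v M) -(map_mxM toC (v *m M)) [RHS]mxE.
have uT : u^t* = P *m (map_mx toC v)^t* by rewrite def_u trmx_mul map_mxM trmxCK.
split.
  by rewrite toC_form -/AC AC_spectral uT def_u !mulmxA.
have := toC_form 1%:M; rewrite map_mx1 !mulmx1 => ->.
by rewrite uT def_u mulmxA mulmxKtV ?spectral_unitarymx.
Qed.

Lemma rayleigh (v : 'rV[R]_n) : (v *m v^T) 0 0 = 1 ->
  exists2 mu, eigenvalue A mu & mu <= (v *m A *m v^T) 0 0.
Proof.
move=> v1.
have [j0 _ | no_index] := pickP (fun _ : 'I_n => true); last first.
  move: v1; rewrite mxE big1 => [/eqP|j _]; first by rewrite eq_sym oner_eq0.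
  by have := no_index j.
have [jm _ jm_min] :=
  Order.TotalTheory.arg_minP (fun j => complex.Re (d 0 j)) (isT : predT j0).
set mu := complex.Re (d 0 jm); exists mu; first exact: eigenvalue_spectral_diag.
have [formA form1] := quadratic_form_spectral (erefl (map_mx toC v *m P^t* )).
rewrite diag_form in formA; rewrite gram_form v1 rmorph1 in form1.
rewrite -lecR -subr_ge0 formA -[toC mu]mulr1 form1.
rewrite mulr_sumr -sumrB; apply: sumr_ge0 => k _.
rewrite -mulrBl spectral_diag_toC -rmorphB; apply: mulr_ge0; last exact: mul_conjC_ge0.
by rewrite ler0c subr_ge0 jm_min.
Qed.

End Rayleigh.

Section InfimumFacts.
Variable R : realType.

(* The infimum of a set of nonnegative reals is nonnegative (also when the
   set is empty, since [inf set0 = 0]). *)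
Lemma inf_ge0 (E : set R) : (forall x, E x -> 0 <= x) -> 0 <= inf E.
Proof.
move=> E_ge0; have [E_ne|/nonemptyPn ->] := pselect (E !=set0)%classic.
  exact: lb_le_inf.
by rewrite inf0.
Qed.

Lemma inf_eq0 (E : set R) : (forall x, E x -> x = 0) -> inf E = 0.
Proof.
move=> E0; have [[x Ex]|/nonemptyPn ->] := pselect (E !=set0)%classic; last exact: inf0.
suff -> : E = [set 0]%classic by rewrite inf1.
by apply/funext => y; apply/propext; split => [/E0|->] //; rewrite -(E0 x Ex).
Qed.

Lemma inf_le_mem (E : set R) x : (forall y, E y -> 0 <= y) -> E x -> inf E <= x.
Proof. by move=> E_ge0 Ex; apply: ge_inf Ex; exists 0. Qed.

End InfimumFacts.

Section Norms.
Variable R : realType.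

Lemma norm1_ge0 k (v : 'cV[R]_k) : 0 <= norm1 v.
Proof. by apply: sumr_ge0 => i _; exact: normr_ge0. Qed.

Lemma norm2_ge0 k (v : 'cV[R]_k) : 0 <= norm2 v.
Proof. exact: sqrtr_ge0. Qed.

Lemma norm1_subcols n N (X : 'M[R]_(n, N)) (I : {set 'I_N}) (eta : 'cV_n) :
  norm1 ((subcols X I)^T *m eta) = \sum_(i in I) `|(X^T *m eta) i 0|.
Proof.
rewrite /norm1 (big_enum_val (fun i => `|(X^T *m eta) i 0|)) /=.
by apply: eq_bigr => k _; rewrite !mxE; congr `|_|; apply: eq_bigr => j _; rewrite !mxE.
Qed.

Lemma norm2Z k (v : 'cV[R]_k) c : norm2 (c *: v) = `|c| * norm2 v.
Proof.
rewrite /norm2 -sqrtr_sqr -sqrtrM ?sqr_ge0 // mulr_sumr.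
by congr Num.sqrt; apply: eq_bigr => i _; rewrite mxE exprMn.
Qed.

Lemma norm1Z p k (M : 'M[R]_(p, k)) (v : 'cV[R]_k) c :
  norm1 (M *m (c *: v)) = `|c| * norm1 (M *m v).
Proof.
rewrite /norm1 mulr_sumr; apply: eq_bigr => i _.
by rewrite -scalemxAr mxE normrM.
Qed.

Lemma norm2_delta k (i0 : 'I_k) : norm2 (delta_mx i0 0 : 'cV[R]_k) = 1.
Proof.
rewrite /norm2 (bigD1 i0) //= big1 => [|i i_neq]; last by rewrite !mxE (negPf i_neq) expr0n.
by rewrite !mxE !eqxx addr0 expr1n sqrtr1.
Qed.

(* A matrix unit has ||.||_{2,col} = 1; so matrices of unit column norm exist. *)
Lemma colnorm_delta n s (i0 : 'I_n) (j0 : 'I_s) :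
  colnorm (delta_mx i0 j0 : 'M[R]_(n, s)) = 1.
Proof.
have col_delta j :
    col j (delta_mx i0 j0 : 'M[R]_(n, s)) = (j == j0)%:R *: delta_mx i0 0.
  by apply/colP => i; rewrite !mxE eqxx andbT -natrM mulnb andbC.
rewrite /colnorm (bigD1 j0) //= big1 => [|j j_neq].
  by rewrite col_delta eqxx scale1r norm2_delta addr0.
by rewrite col_delta (negPf j_neq) norm2Z normr0 mul0r.
Qed.

Lemma row_gram k (u : 'rV[R]_k) : (u *m u^T) 0 0 = \sum_j u 0 j ^+ 2.
Proof. by rewrite mxE; apply: eq_bigr => j _; rewrite mxE expr2. Qed.

Lemma norm2_eq1_gram k (v : 'cV[R]_k) : norm2 v = 1 -> (v^T *m v^T^T) 0 0 = 1.
Proof.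
move=> v1; have S_ge0 : 0 <= \sum_(i < k) v i 0 ^+ 2.
  by apply: sumr_ge0 => i _; exact: sqr_ge0.
rewrite row_gram -[RHS](expr1n _ 2) -v1 sqr_sqrtr //.
by apply: eq_bigr => j _; rewrite mxE.
Qed.

Lemma sum_subset_le (T : finType) (A B : {set T}) (F : T -> R) :
  A \subset B -> (forall i, 0 <= F i) -> \sum_(i in A) F i <= \sum_(i in B) F i.
Proof.
move=> AB F_ge0; rewrite [X in _ <= X](big_setID A) /= (finset.setIidPr AB).
by rewrite lerDl sumr_ge0.
Qed.

Lemma sum_sqr_le_sqr_sum (T : finType) (A : {set T}) (F : T -> R) :
  (forall i, 0 <= F i) -> \sum_(i in A) F i ^+ 2 <= (\sum_(i in A) F i) ^+ 2.
Proof.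
move=> F_ge0; rewrite expr2 mulr_suml; apply: ler_sum => i iA.
by rewrite expr2 ler_wpM2l // (bigD1 i) //= lerDl sumr_ge0.
Qed.

End Norms.

Section SmallestEigenvalue.
Variable R : realType.

Lemma gram_quadratic_form n p (M : 'M[R]_(n, p)) (u : 'rV_n) :
  (u *m (M *m M^T) *m u^T) 0 0 = \sum_j (u *m M) 0 j ^+ 2.
Proof.
by rewrite mulmxA -(mulmxA _ M^T) -trmx_mul row_gram.
Qed.

Lemma gram_eigenvalue_ge0 n p (M : 'M[R]_(n, p)) a :
  eigenvalue (M *m M^T) a -> 0 <= a.
Proof.
move=> /eigenvalueP [u ua u_neq0].
have := gram_quadratic_form M u; rewrite ua -scalemxAl mxE row_gram => form.
have uu_gt0 : 0 < \sum_j u 0 j ^+ 2.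
  rewrite lt_def sumr_ge0 ?andbT => [|j _]; last exact: sqr_ge0.
  apply: contra u_neq0 => /eqP/psumr_eq0P uu0; apply/eqP/rowP => j; rewrite mxE.
  by apply/eqP; rewrite -sqrf_eq0 uu0 // => i _; exact: sqr_ge0.
by rewrite -(pmulr_lge0 _ uu_gt0) form sumr_ge0 // => j _; exact: sqr_ge0.
Qed.

Lemma lambda_min_le_gram_form n p (M : 'M[R]_(n, p)) (u : 'rV_n) :
  (u *m u^T) 0 0 = 1 -> lambda_min (M *m M^T) <= \sum_j (u *m M) 0 j ^+ 2.
Proof.
have sym : (M *m M^T)^T = M *m M^T by rewrite trmx_mul trmxK.
move=> u1; have [mu mu_eig mu_le] := rayleigh sym u1.
rewrite gram_quadratic_form in mu_le; apply: le_trans mu_le.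
by apply: inf_le_mem mu_eig => a; exact: gram_eigenvalue_ge0.
Qed.

End SmallestEigenvalue.

Section SecondBound.
Variables (R : realType) (n N m : nat) (X : 'M[R]_(n, N)).

Lemma exists_subset_card (I : {set 'I_N}) :
  (m <= #|I|)%N -> exists2 I0 : {set 'I_N}, I0 \subset I & #|I0| = m.
Proof.
move=> /card_geqP [s [s_uniq s_size sI]]; exists [set x in s].
  by apply/fintype.subsetP => x; rewrite inE; exact: sI.
by rewrite cardsE; move/card_uniqP: s_uniq => ->.
Qed.

(* The core estimate: for I0 in I and a unit vector eta,
   sqrt(lambda_min(X_I0 X_I0^T)) <= ||X_I0^T eta||_2 <= ||X_I^T eta||_1. *)
Lemma sqrt_lambda_min_le_norm1 (I0 I : {set 'I_N}) (eta : 'cV[R]_n) :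
  I0 \subset I -> norm2 eta = 1 ->
  Num.sqrt (lambda_min (subcols X I0 *m (subcols X I0)^T))
    <= norm1 ((subcols X I)^T *m eta).
Proof.
move=> I0I eta1; set y := X^T *m eta.
have lam_le := lambda_min_le_gram_form (subcols X I0) (norm2_eq1_gram eta1).
have form : \sum_j (eta^T *m subcols X I0) 0 j ^+ 2 = \sum_(i in I0) `|y i 0| ^+ 2.
  rewrite (big_enum_val (fun i => `|y i 0| ^+ 2)) /=.
  apply: eq_bigr => k _; rewrite real_normK ?num_real //; congr (_ ^+ 2).
  by rewrite !mxE; apply: eq_bigr => j _; rewrite !mxE mulrC.
rewrite form in lam_le.
have y_ge0 i : 0 <= `|y i 0| by exact: normr_ge0.
rewrite norm1_subcols -[X in _ <= X]ger0_norm ?sumr_ge0 // -sqrtr_sqr.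
apply: ler_wsqrtr; apply: (le_trans lam_le); apply: (le_trans (sum_sqr_le_sqr_sum _ _)) => //.
by rewrite ler_sqr ?nnegrE ?sumr_ge0 // sum_subset_le.
Qed.

(* The second bound, when the infimum defining gamma_m is over a nonempty
   set (a unit vector exists since n > 0, and |T| = N >= m). *)
Lemma min_sqrt_lambda_le_gamma : (0 < n)%N -> (m <= N)%N ->
  min_sqrt_lambda m X <= gamma m X.
Proof.
move=> n_gt0 mN; set e0 : 'cV[R]_n := delta_mx (Ordinal n_gt0) 0.
apply: lb_le_inf.
  exists (norm1 ((subcols X [set: 'I_N])^T *m e0)), e0, [set: 'I_N].
  by split; [exact: norm2_delta | split=> //; rewrite cardsT card_ord].
move=> _ [eta [I [eta1 [mI ->]]]]; have [I0 I0I I0m] := exists_subset_card mI.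
apply: le_trans (sqrt_lambda_min_le_norm1 I0I eta1).
by apply: inf_le_mem; [move=> _ [I' [_ ->]]; exact: sqrtr_ge0 | exists I0].
Qed.

End SecondBound.

Section Blocks.
Variables (s m N : nat).
Hypothesis hN : (s * m <= N)%N.

Lemma block_index_lt (i : 'I_s) (k : 'I_m) : (i * m + k < N)%N.
Proof.
have : (i.+1 * m <= s * m)%N by rewrite leq_mul2r ltn_ord orbT.
by rewrite mulSn; have := ltn_ord k; lia.
Qed.

Definition block (i : 'I_s) : {set 'I_N} :=
  [set Ordinal (block_index_lt i k) | k : 'I_m].

(* The blocks have m elements each, and are pairwise disjoint since their
   elements have distinct quotients by m. *)
Lemma card_block i : #|block i| = m.
Proof.
rewrite card_imset ?card_ord // => k k' /(congr1 val) /= /eqP.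
by rewrite eqn_add2l => /eqP /val_inj.
Qed.

Lemma disjoint_blocks (i j : 'I_s) : i != j -> [disjoint block i & block j].
Proof.
move=> i_neq_j; apply/pred0P => x /=; apply/negbTE/negP => /andP [].
move=> /imsetP [k _ ->] /imsetP [k' _ /(congr1 val) /= e].
have m_gt0 : (0 < m)%N by apply: leq_ltn_trans (ltn_ord k).
have := congr1 (fun t => t %/ m)%N e => /=.
by rewrite !divnMDl // !divn_small // !addn0 => /val_inj eq_ij; rewrite eq_ij eqxx in i_neq_j.
Qed.

End Blocks.

Section FirstBound.
Variables (R : realType) (n N m : nat) (X : 'M[R]_(n, N)).

Lemma gamma_scaled_le (eta : 'cV[R]_n) (I : {set 'I_N}) :
  (m <= #|I|)%N -> gamma m X * norm2 eta <= norm1 ((subcols X I)^T *m eta).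
Proof.
move=> mI; have [eta0|eta_neq0] := eqVneq (norm2 eta) 0.
  by rewrite eta0 mulr0 norm1_ge0.
have eta_gt0 : 0 < norm2 eta by rewrite lt_def eta_neq0 norm2_ge0.
have unit_eta : norm2 ((norm2 eta)^-1 *: eta) = 1.
  by rewrite norm2Z ger0_norm ?invr_ge0 ?norm2_ge0 // mulVf.
have : gamma m X <= norm1 ((subcols X I)^T *m ((norm2 eta)^-1 *: eta)).
  apply: inf_le_mem; last by exists ((norm2 eta)^-1 *: eta), I.
  by move=> _ [eta' [I' [_ [_ ->]]]]; exact: norm1_ge0.
by rewrite norm1Z ger0_norm ?invr_ge0 ?norm2_ge0 // ler_pdivlMl // mulrC.
Qed.

Lemma gamma_colnorm_le_gfun s (L : 'M[R]_(n, s)) :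
  (s * m <= N)%N -> gamma m X * colnorm L <= gfun m X L.
Proof.
move=> hN; apply: lb_le_inf.
  exists (\sum_(i < s) norm1 ((subcols X (block hN i))^T *m col i L)).
  exists (block hN); split; first exact: disjoint_blocks.
  by split => // i; rewrite card_block.
move=> _ [J [_ [mJ ->]]]; rewrite /colnorm mulr_sumr; apply: ler_sum => i _.
exact: gamma_scaled_le.
Qed.

(* The first bound; n > 0 and s > 0 make D an infimum over a nonempty set. *)
Lemma gamma_le_Dconst s : (0 < n)%N -> (0 < s)%N -> (s * m <= N)%N ->
  gamma m X <= Dconst s m X.
Proof.
move=> n_gt0 s_gt0 hN; apply: lb_le_inf.
  pose L : 'M[R]_(n, s) := delta_mx (Ordinal n_gt0) (Ordinal s_gt0).
  by exists (gfun m X L), L; rewrite colnorm_delta.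
by move=> _ [L [L1 ->]]; have := gamma_colnorm_le_gfun L hN; rewrite L1 mulr1.
Qed.

End FirstBound.

Section DimensionZero.
Variables (R : realType) (N m : nat) (X : 'M[R]_(0, N)).

(* In dimension 0 there is no unit vector, so gamma_m is an empty infimum. *)
Lemma gamma_dim0 : gamma m X = 0.
Proof.
apply: inf_eq0 => x [eta [I [eta1 _]]].
by move: eta1; rewrite /norm2 big_ord0 sqrtr0 => /eqP; rewrite eq_sym oner_eq0.
Qed.

(* A 0 x 0 matrix has no eigenvalue, so all the lambda_min involved are 0. *)
Lemma min_sqrt_lambda_dim0 : min_sqrt_lambda m X = 0.
Proof.
apply: inf_eq0 => _ [I [_ ->]]; rewrite -[RHS]sqrtr0; congr Num.sqrt.
by apply: inf_eq0 => a /eigenvalueP [u _]; rewrite (thinmx0 u) eqxx.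
Qed.

End DimensionZero.

Lemma Dconst_ge0 (R : realType) n N s m (X : 'M[R]_(n, N)) : 0 <= Dconst s m X.
Proof.
apply: inf_ge0 => _ [L [_ ->]]; apply: inf_ge0 => _ [J [_ [_ ->]]].
by apply: sumr_ge0 => i _; exact: norm1_ge0.
Qed.

Theorem lemma8 (R : realType) (n N s m : nat) (X : 'M[R]_(n, N))
  (hrank : \rank X = n) (hm : is_genericity_index X m)
  (hs : (0 < s)%N) (hN : (s * m <= N)%N) :
  gamma m X <= Dconst s m X /\ min_sqrt_lambda m X <= gamma m X.
Proof.
have mN : (m <= N)%N by apply: leq_trans hN; rewrite leq_pmull.
case: (posnP n) => [n0 | n_gt0]; last first.
  exact: conj (gamma_le_Dconst X n_gt0 hs hN) (min_sqrt_lambda_le_gamma X n_gt0 mN).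
subst n; rewrite gamma_dim0 min_sqrt_lambda_dim0.
exact: conj (Dconst_ge0 s m X) (lexx 0).
Qed.
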